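(* A morphism in $\mathbf{MetCH_{sep}}$ is a regular monomorphism if and only if it is an embedding.
   Context: A metric on a set $X$ is a map $d\colon X\times X\to[0,\infty]$ with $d(x,x)=0$ and $d(x,z)\le d(x,y)+d(y,z)$ (not necessarily symmetric, $\infty$ allowed); separated means $d(x,y)=0=d(y,x)$ implies $x=y$. A separated metric compact Hausdorff space is a compact Hausdorff space with a separated metric $d\colon X\times X\to[0,\infty]$ continuous with respect to the upper topology on $[0,\infty]$ (open sets $]u,\infty]$, plus $\emptyset$ and $[0,\infty]$). $\mathbf{MetCH_{sep}}$ has these spaces as objects and continuous non-expansive maps ($d_Y(f(x),f(y))\le d_X(x,y)$) as morphisms. An embedding is an injective morphism $f\colon X\to Y$ with $d_X(x,y)=d_Y(f(x),f(y))$ for all $x,y\in X$. *)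

From HB Require Import structures.
From mathcomp Require Import all_boot all_order all_algebra.
From mathcomp Require Import all_classical all_reals topology.
Set Implicit Arguments. Unset Strict Implicit. Unset Printing Implicit Defensive.
Import Order.TTheory GRing.Theory Num.Theory.
Local Open Scope classical_set_scope.
Local Open Scope ring_scope.
Local Open Scope ereal_scope.

Record MetCH (R : realType) := {
  carrier :> topologicalType ;
  dist : carrier -> carrier -> \bar R ;
  dist_ge0 : forall x y, 0 <= dist x y ;
  dist_refl : forall x, dist x x = 0 ;
  dist_triangle : forall x y z, dist x z <= dist x y + dist y z ;
  dist_separated : forall x y, dist x y = 0 -> dist y x = 0 -> x = y ;
  carrier_compact : compact [set: carrier] ;
  carrier_hausdorff : hausdorff_space carrier ;
  (* continuity of d : X x X -> [0,oo] for the upper topology on [0,oo],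
     whose nontrivial opens are ]u, oo], u in [0, oo] *)
  dist_upper_cont : forall u : \bar R, 0 <= u ->
     open [set p : carrier * carrier | u < dist p.1 p.2]
}.

Arguments dist {R} _ _ _.
Record MetCHHom (R : realType) (X Y : MetCH R) := {
  hom_fun :> X -> Y ;
  hom_cont : continuous hom_fun ;
  hom_nonexp : forall x y, dist Y (hom_fun x) (hom_fun y) <= dist X x y
}.

Definition regular_mono (R : realType) (X Y : MetCH R) (f : MetCHHom X Y) :=
  exists (Z : MetCH R) (g h : MetCHHom Y Z),
    (g \o f = h \o f)%FUN /\
    forall (W : MetCH R) (k : MetCHHom W Y), (g \o k = h \o k)%FUN ->
      exists u : MetCHHom W X,
        (f \o u = k)%FUN /\
        forall u' : MetCHHom W X, (f \o u' = k)%FUN -> (u' : W -> X) = u.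

Definition embedding (R : realType) (X Y : MetCH R) (f : MetCHHom X Y) :=
  injective f /\ forall x y, dist X x y = dist Y (f x) (f y).

(* A regular monomorphism is injective (test the equalizer property on the
   one-point space) and isometric: X remetrized by (a, b) |-> d_Y (f a, f b) is
   still an object, and f out of it factors through f itself, necessarily via
   the identity, which is non-expansive.
   Conversely, the image A of an embedding is compact, hence closed, and it is
   the equalizer of the two inclusions of Y into the double of Y along A: two
   copies of Y glued along A, where points on different copies are at distance
   inf_{a in A} d(y, a) + d(a, y').  Compactness of A makes this distance lower
   semicontinuous and positive between the two copies of a point outside A; the
   factorization through f is continuous because f is a closed map. *)

From HB Require Import structures.
From mathcomp Require Import all_boot all_order all_algebra.
From mathcomp Require Import all_classical all_reals topology.
From mathcomp Require Import ereal generic_quotient lra.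
Set Implicit Arguments. Unset Strict Implicit. Unset Printing Implicit Defensive.
Import Order.TTheory GRing.Theory Num.Theory.
Local Open Scope classical_set_scope.
Local Open Scope ring_scope.
Local Open Scope ereal_scope.

Lemma open_preimage_prod_map (T U : topologicalType) (f g : T -> U) (S : set (U * U)) :
  continuous f -> continuous g -> open S -> open [set p : T * T | S (f p.1, g p.2)].
Proof.
move=> cf cg; rewrite !openE => oS p /oS [[P Q] [/= Pf Qg] PQS].
exists (f @^-1` P, g @^-1` Q); first by split; [apply: cf | apply: cg].
by move=> [a b] [/= Pa Qb]; apply: PQS.
Qed.

Lemma compact_injective_factor_continuous (W X Y : topologicalType)
    (f : X -> Y) (k : W -> Y) (u : W -> X) :
  compact [set: X] -> hausdorff_space Y -> continuous f -> injective f ->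
  continuous k -> (forall w, f (u w) = k w) -> continuous u.
Proof.
move=> cX hY cf finj ck fu; apply/continuous_closedP => C clC.
have -> : u @^-1` C = k @^-1` (f @` C).
  apply/seteqP; split => w /=; first by move=> Cw; exists (u w).
  by case=> c Cc fc; rewrite -(finj _ _ (etrans fc (esym (fu w)))).
apply: (iffLR (continuous_closedP _) ck); apply: compact_closed hY _.
apply: continuous_compact; first exact: continuous_subspaceT.
by rewrite -[C]setTI; exact: compact_closedI.
Qed.

Section point_and_comap.
Context (R : realType).

Definition point_MetCH : MetCH R.
refine (@Build_MetCH R (discrete_topology unit) (fun _ _ => 0) _ _ _ _ _ _ _).
- by move=> _ _; exact: le_refl.
- by [].
- by move=> _ _ _; rewrite adde0.
- by move=> [] [].
- by apply: finite_compact; apply: (@sub_finite_set _ _ [set tt]) => // -[].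
- exact: discrete_hausdorff.
- move=> u u0; rewrite (_ : [set _ | _] = set0); first exact: open0.
  by apply/seteqP; split => // p /=; rewrite ltNge u0.
Defined.

Definition const_hom (W X : MetCH R) (x : X) : MetCHHom W X.
refine (@Build_MetCHHom R W X (fun _ => x) (@cst_continuous _ _ x) _).
by move=> a b; rewrite dist_refl dist_ge0.
Defined.

Definition comap_MetCH (X Y : MetCH R) (f : X -> Y) (fcont : continuous f)
    (finj : injective f) : MetCH R.
refine (@Build_MetCH R X (fun a b => dist Y (f a) (f b)) _ _ _ _
   (@carrier_compact _ X) (@carrier_hausdorff _ X) _).
- by move=> a b; exact: dist_ge0.
- by move=> a; exact: dist_refl.
- by move=> a b c; exact: dist_triangle.
- by move=> a b fab fba; apply: finj; exact: dist_separated.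
- by move=> u u0; exact: (open_preimage_prod_map fcont fcont (dist_upper_cont u0)).
Defined.

Lemma regular_mono_injective (X Y : MetCH R) (f : MetCHHom X Y) :
  regular_mono f -> injective f.
Proof.
case=> Z [g [h [gf_hf univ]]] x1 x2 fx12.
have gk_hk : (g \o const_hom point_MetCH (f x1) = h \o const_hom _ (f x1))%FUN.
  by apply: funext => _ /=; exact: (congr1 (fun F => F x1) gf_hf).
have [u [_ u_uniq]] := univ _ _ gk_hk.
have u_x1 : (const_hom point_MetCH x1 : _ -> _) = u by apply: u_uniq.
have u_x2 : (const_hom point_MetCH x2 : _ -> _) = u.
  by apply: u_uniq; apply: funext => _ /=; rewrite fx12.
by have := congr1 (fun F => F tt) (etrans u_x1 (esym u_x2)).
Qed.

Lemma regular_mono_embedding (X Y : MetCH R) (f : MetCHHom X Y) :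
  regular_mono f -> embedding f.
Proof.
move=> freg; have finj := regular_mono_injective freg.
case: (freg) => Z [g [h [gf_hf univ]]]; split => // a b.
pose k := @Build_MetCHHom R (comap_MetCH (@hom_cont _ _ _ f) finj) Y f
  (@hom_cont _ _ _ f) (fun _ _ => le_refl _).
have [u [fu _]] := univ _ k gf_hf.
have uE c : u c = c by apply: (finj); exact: (congr1 (fun F => F c) fu).
apply/eqP; rewrite eq_le hom_nonexp andbT.
by have := hom_nonexp u a b; rewrite !uE.
Qed.

End point_and_comap.

Section ereal_facts.
Context (R : realType).
Implicit Types (x y : \bar R) (r : R).

Lemma EFin_between x y : x < y -> exists r, x < r%:E < y.
Proof.
case: x => [a| |]; case: y => [b| |] //= ab.
- by exists ((a + b) / 2)%R; move: ab; rewrite !lte_fin => ab; apply/andP; split; lra.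
- by exists (a + 1)%R; rewrite lte_fin ltry andbT; lra.
- by exists (b - 1)%R; rewrite lte_fin ltNyr /=; lra.
- by exists 0%R; rewrite ltNyr ltry.
Qed.

Lemma lte_fin_adde_split r x y : 0 <= x -> 0 <= y ->
  r%:E < x + y -> exists s t : R, [/\ s%:E < x, t%:E < y & (r < s + t)%R].
Proof.
case: x => [a| |] //; case: y => [b| |] //.
- move=> _ _; rewrite -EFinD lte_fin => rab.
  exists (a - (a + b - r) / 3)%R, (b - (a + b - r) / 3)%R.
  by split; rewrite ?lte_fin; lra.
- by move=> _ _ _; exists (a - 1)%R, (r - a + 2)%R; split; rewrite ?ltry ?lte_fin //; lra.
- by move=> _ _ _; exists (r - b + 2)%R, (b - 1)%R; split; rewrite ?ltry ?lte_fin //; lra.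
- by move=> _ _ _; exists (r + 2)%R, (-1)%R; split; rewrite ?ltry //; lra.
Qed.

Lemma compact_near_ereal_inf_ge (X : topologicalType) (A : set X) (I : Type)
    (F : set_system I) (G : I -> X -> \bar R) (b : I -> \bar R) :
  compact A -> Filter F ->
  (forall a, A a -> \forall a' \near a & i \near F, b i < G i a') ->
  \forall i \near F, b i <= ereal_inf (G i @` A).
Proof.
move=> cA FF near_gt.
have := (compact_near_coveringP A).1 cA I F (fun i a => b i < G i a) FF near_gt.
apply: filterS => i A_gt; apply: le_ereal_inf_tmp => _ [a Aa <-].
exact/ltW/A_gt.
Qed.

End ereal_facts.

Section dist_facts.
Context (R : realType) (Y : MetCH R).
Local Notation d := (dist Y).

Lemma dist_fin_num y y' : d y y' != +oo -> d y y' \is a fin_num.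
Proof. by move=> dnoo; rewrite ge0_fin_numE ?dist_ge0 // lt_neqAle dnoo leey. Qed.

Lemma dist_gt_near (r : R) (y0 y1 : Y) : r%:E < d y0 y1 ->
  \forall y \near y0 & y' \near y1, r%:E < d y y'.
Proof.
move=> r_lt; have [r0|r0] := ltP r 0%R.
  by apply: filterE => p; apply: (lt_le_trans _ (@dist_ge0 _ Y p.1 p.2)); rewrite lte_fin.
have := @dist_upper_cont _ Y r%:E; rewrite lee_fin => /(_ r0).
by rewrite openE => /(_ (y0, y1) r_lt).
Qed.

Lemma dist_add_gt_near (r : R) (y a y' : Y) : r%:E < d y a + d a y' ->
  \forall a' \near a & p \near (y, y'), r%:E < d p.1 a' + d a' p.2.
Proof.
case/lte_fin_adde_split; rewrite ?dist_ge0 // => s [t [s_lt t_lt st]].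
case: (dist_gt_near s_lt) => [[U1 V1] [/= U1y V1a] UV1].
case: (dist_gt_near t_lt) => [[V2 W2] [/= V2a W2y'] VW2].
exists (V1 `&` V2, U1 `*` W2); first by split; [exact: filterI | exists (U1, W2)].
move=> [a' p] [/= [V1a' V2a'] [U1p W2p]] /=.
apply: lt_trans (_ : (s + t)%:E < _); first by rewrite lte_fin.
by rewrite EFinD; apply: lteD; [exact: (UV1 (p.1, a')) | exact: (VW2 (a', p.2))].
Qed.

End dist_facts.

Section dist_via.
Context (R : realType) (Y : MetCH R) (A : set Y).
Local Notation d := (dist Y).

Definition dist_via (y y' : Y) : \bar R := ereal_inf [set d y a + d a y' | a in A].

Lemma dist_via_ge0 y y' : 0 <= dist_via y y'.
Proof. by apply: le_ereal_inf_tmp => _ [a _ <-]; rewrite adde_ge0 ?dist_ge0. Qed.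

Lemma dist_le_via y y' : d y y' <= dist_via y y'.
Proof. by apply: le_ereal_inf_tmp => _ [a _ <-]; exact: dist_triangle. Qed.

Lemma dist_via_le y y' a : A a -> dist_via y y' <= d y a + d a y'.
Proof. by move=> Aa; apply: ereal_inf_lbound; exists a. Qed.

Lemma dist_viaEl y y' : A y -> dist_via y y' = d y y'.
Proof.
move=> Ay; apply/eqP; rewrite eq_le dist_le_via andbT.
by apply: le_trans (dist_via_le _ _ Ay) _; rewrite dist_refl add0e.
Qed.

Lemma dist_viaEr y y' : A y' -> dist_via y y' = d y y'.
Proof.
move=> Ay'; apply/eqP; rewrite eq_le dist_le_via andbT.
by apply: le_trans (dist_via_le _ _ Ay') _; rewrite dist_refl adde0.
Qed.

Lemma dist_via_trianglel x y z : dist_via x z <= d x y + dist_via y z.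
Proof.
have [->|/dist_fin_num dfin] := eqVneq (d x y) +oo.
  by rewrite addye ?leey // gt_eqF // (lt_le_trans _ (dist_via_ge0 _ _)) // ltNy0.
rewrite -leeBlDl //; apply: le_ereal_inf_tmp => _ [a Aa <-].
rewrite leeBlDl // addeA; apply: le_trans (dist_via_le _ _ Aa) _.
by apply: leeD => //; exact: dist_triangle.
Qed.

Lemma dist_via_triangler x y z : dist_via x z <= dist_via x y + d y z.
Proof.
have [->|/dist_fin_num dfin] := eqVneq (d y z) +oo.
  by rewrite addey ?leey // gt_eqF // (lt_le_trans _ (dist_via_ge0 _ _)) // ltNy0.
rewrite -leeBlDr //; apply: le_ereal_inf_tmp => _ [a Aa <-].
rewrite leeBlDr // -addeA; apply: le_trans (dist_via_le _ _ Aa) _.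
by apply: leeD => //; exact: dist_triangle.
Qed.

Hypothesis cA : compact A.

Lemma dist_via_gt_near (r : R) y0 y1 : r%:E < dist_via y0 y1 ->
  \forall y \near y0 & y' \near y1, r%:E < dist_via y y'.
Proof.
move=> r_lt; have [r' /andP[r_r' r'_lt]] := EFin_between r_lt.
suff : \forall p \near (y0, y1), r'%:E <= dist_via p.1 p.2.
  by apply: filterS => p; apply: lt_le_trans.
apply: (@compact_near_ereal_inf_ge _ _ _ _ (nbhs (y0, y1))
  (fun p a => d p.1 a + d a p.2) (fun=> r'%:E)) => // a Aa.
exact/dist_add_gt_near/(lt_le_trans r'_lt)/dist_via_le.
Qed.

Lemma dist_via_gt0 y : ~ A y -> 0 < dist_via y y.
Proof.
move=> nAy; have r_le_via : \forall r \near (0%R : R)^'+, r%:E <= dist_via y y.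
  apply: (@compact_near_ereal_inf_ge _ _ _ _ (0%R : R)^'+
    (fun _ a => d y a + d a y) (fun r => r%:E)) => // a Aa.
  have d_gt0 : 0 < d y a + d a y.
    rewrite lt_neqAle adde_ge0 ?dist_ge0 // andbT eq_sym padde_eq0 ?dist_ge0 //.
    by apply/negP => /andP[/eqP ya /eqP ay]; apply: nAy; rewrite (dist_separated ya ay).
  have [t /andP[t_gt0 t_lt]] := EFin_between d_gt0.
  have [[V P] [/= Va Pyy] VP] := dist_add_gt_near t_lt.
  exists (V, [set r | (r < t)%R]) => [|[a' r] [/= Va' rt]].
    by split => //; apply: nbhs_right_lt; rewrite -lte_fin.
  apply: lt_trans (VP (a', (y, y)) _); first by rewrite lte_fin.
  by split => //; exact: nbhs_singleton.
have [r [r_le r_gt0]] := filter_ex (filterI r_le_via (nbhs_right_gt (0%R : R))).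
by apply: lt_le_trans r_le; rewrite lte_fin.
Qed.

End dist_via.

Local Open Scope quotient_scope.

Section double.
Context (R : realType) (Y : MetCH R) (A : set Y) (cA : compact A).
Local Notation d := (dist Y).
Local Notation sheets := {b : bool & (Y : topologicalType)}.

Let closedA : closed A := compact_closed (@carrier_hausdorff _ Y) cA.

Definition glue (p q : sheets) : bool :=
  (projT2 p == projT2 q) && ((projT1 p == projT1 q) || `[< A (projT2 p) >]).

Lemma glue_refl : reflexive glue. Proof. by move=> p; rewrite /glue !eqxx. Qed.

Lemma glue_sym : symmetric glue.
Proof.
move=> [b y] [b' y']; rewrite /glue /=.
by case: (eqVneq y y') => [<-|//]; rewrite eq_sym.
Qed.

Lemma glue_trans : transitive glue.
Proof.
move=> [bq yq] [bp yp] [br yr]; rewrite /glue /=.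
case/andP => /eqP <- + /andP[/eqP <-].
case: (asboolP (A yp)) => Ap; rewrite ?orbT ?orbF ?eqxx //.
by move=> /eqP -> /eqP ->; rewrite !eqxx.
Qed.

Definition glue_equiv := EquivRel _ glue_refl glue_sym glue_trans.
Definition double := {eq_quot glue_equiv}.
HB.instance Definition _ := Topological.copy double (quotient_topology double).
HB.instance Definition _ := Quotient.on double.

Definition double_in (b : bool) (y : Y) : double := \pi_double (existT _ b y).
Definition double_base (z : double) : Y := projT2 (repr z).
(* The sheet of a point of A is normalized to [false], so that it is well defined. *)
Definition double_sheet (z : double) : bool :=
  projT1 (repr z) && ~~ `[< A (double_base z) >].

Lemma glue_repr_in b y : glue (repr (double_in b y)) (existT _ b y).
Proof. by apply/(@eqmodP _ glue_equiv); rewrite reprK. Qed.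

Lemma double_base_in b y : double_base (double_in b y) = y.
Proof. by have /andP[/eqP] := glue_repr_in b y. Qed.

Lemma double_sheet_in b y : double_sheet (double_in b y) = b && ~~ `[< A y >].
Proof.
rewrite /double_sheet double_base_in; have /andP[/eqP ->] := glue_repr_in b y.
by case: (asboolP (A y)) => Ay; rewrite ?andbF ?andbT ?orbF // => /eqP.
Qed.

Lemma double_sheet_base z : z = double_in (double_sheet z) (double_base z).
Proof.
rewrite -{1}(reprK z) /double_in /double_sheet /double_base.
apply/(@eqmodP _ glue_equiv) => /=.
case: (repr z) => b y /=; rewrite /glue /= eqxx /=.
by case: (asboolP (A y)) => Ay; rewrite ?andbT ?andbF ?eqxx ?orbT.
Qed.

Lemma double_in_eq y : double_in false y = double_in true y <-> A y.
Proof.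
split => [/(congr1 double_sheet)|Ay]; first by rewrite !double_sheet_in /=; case: asboolP.
rewrite [LHS]double_sheet_base [RHS]double_sheet_base !double_sheet_in.
by rewrite !double_base_in asboolT.
Qed.

Lemma double_sheet_A z : A (double_base z) -> double_sheet z = false.
Proof. by move=> Az; rewrite /double_sheet asboolT // andbF. Qed.

Lemma open_double (U : set double) :
  (forall b, open [set y | U (double_in b y)]) -> open U.
Proof. by move=> U_open; apply/sigT_openP. Qed.

Lemma double_base_continuous : continuous double_base.
Proof.
apply/continuousP => V oV; apply: open_double => b.
suff -> : [set y | (double_base @^-1` V) (double_in b y)] = V by [].
by apply/seteqP; split => y /=; rewrite double_base_in.
Qed.

Lemma double_in_continuous b : continuous (double_in b).
Proof.
by move=> y; apply: continuous_comp; [exact: existT_continuous | exact: pi_continuous].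
Qed.

Definition sheet_off_A (b : bool) : set double :=
  [set z | double_sheet z = b /\ ~ A (double_base z)].

Lemma open_sheet_off_A b : open (sheet_off_A b).
Proof.
apply: open_double => c.
suff -> : [set y | sheet_off_A b (double_in c y)] = if c == b then ~` A else set0.
  by case: eqP => _; [exact: closed_openC | exact: open0].
apply/seteqP; split => y; rewrite /sheet_off_A /= double_sheet_in double_base_in.
  by case: (asboolP (A y)) => Ay [] //; rewrite andbT => <- _; rewrite eqxx.
by case: eqP => [<-|//] nAy; rewrite asboolF // andbT.
Qed.

Lemma double_hausdorff : hausdorff_space double.
Proof.
rewrite open_hausdorff => z w zw.
have [base_zw|base_zw] := eqVneq (double_base z) (double_base w).
  have sheet_zw : double_sheet z != double_sheet w.
    apply: contra zw => /eqP e.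
    by rewrite [z]double_sheet_base [w]double_sheet_base e base_zw.
  have nAz : ~ A (double_base z).
    by move=> Az; move: sheet_zw; rewrite !double_sheet_A -?base_zw ?eqxx.
  exists (sheet_off_A (double_sheet z), sheet_off_A (double_sheet w)).
    by rewrite !inE /sheet_off_A /= -base_zw.
  split; [exact: open_sheet_off_A | exact: open_sheet_off_A |].
  apply/eqP/seteqP; split => // u [[/= zu _] [wu _]].
  by move: sheet_zw; rewrite -zu -wu eqxx.
have := @carrier_hausdorff _ Y; rewrite open_hausdorff => /(_ _ _ base_zw).
case=> [[U V] /= [Uz Vw] [oU oV UV0]].
exists (double_base @^-1` U, double_base @^-1` V); first by move: Uz Vw; rewrite !inE.
have base_open := iffLR (continuousP _) double_base_continuous.
split; [exact: base_open | exact: base_open |].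
apply/eqP/seteqP; split => // u [/= Uu Vu].
by move/eqP/seteqP: UV0 => [+ _] => /(_ (double_base u)); apply.
Qed.

Lemma double_compact : compact [set: double].
Proof.
have -> : [set: double] = \pi_double @` [set: sheets].
  by apply/seteqP; split => // z _; exists (repr z) => //; exact: reprK.
apply: continuous_compact.
  by apply: continuous_subspaceT => x; exact: pi_continuous.
apply: sigT_compact; first exact: finite_finset.
by move=> _; exact: carrier_compact.
Qed.

Definition double_dist (z w : double) : \bar R :=
  if double_sheet z == double_sheet w then d (double_base z) (double_base w)
  else dist_via A (double_base z) (double_base w).

Lemma double_dist_ge0 z w : 0 <= double_dist z w.
Proof.
by rewrite /double_dist; case: ifP => _; [exact: dist_ge0 | exact: dist_via_ge0].
Qed.

Lemma dist_le_double_dist z w : d (double_base z) (double_base w) <= double_dist z w.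
Proof.
by rewrite /double_dist; case: ifP => _; [exact: le_refl | exact: dist_le_via].
Qed.

Lemma double_dist_refl z : double_dist z z = 0.
Proof. by rewrite /double_dist eqxx dist_refl. Qed.

Lemma double_dist_triangle x y z :
  double_dist x z <= double_dist x y + double_dist y z.
Proof.
rewrite /double_dist.
case: (double_sheet x); case: (double_sheet y); case: (double_sheet z) => /=.
all: try exact: dist_triangle.
all: try exact: dist_via_trianglel.
all: try exact: dist_via_triangler.
all: apply: le_trans (dist_triangle _ (double_base y) _) _.
all: by apply: leeD; exact: dist_le_via.
Qed.

Lemma double_dist_separated z w :
  double_dist z w = 0 -> double_dist w z = 0 -> z = w.
Proof.
move=> zw0 wz0; have base_zw : double_base z = double_base w.
  by apply: (@dist_separated _ Y); apply/eqP; rewrite eq_le dist_ge0 andbT;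
    [rewrite -zw0 | rewrite -wz0]; exact: dist_le_double_dist.
move: zw0; rewrite /double_dist; case: eqVneq => [sheet_zw _|sheet_zw via0].
  by rewrite [z]double_sheet_base [w]double_sheet_base sheet_zw base_zw.
have nAz : ~ A (double_base z).
  by move=> Az; move: sheet_zw; rewrite !double_sheet_A -?base_zw ?eqxx.
by have := dist_via_gt0 cA nAz; rewrite {2}base_zw via0 ltxx.
Qed.

Lemma double_dist_upper_cont (u : \bar R) : 0 <= u ->
  open [set p : double * double | u < double_dist p.1 p.2].
Proof.
move=> u0; rewrite openE => -[z w] /= u_lt.
case: u u0 u_lt => [r| |] //= u0 u_lt; last by rewrite ltNge leey in u_lt.
have [r_lt|r_ge] := ltP r%:E (d (double_base z) (double_base w)).
  case: (dist_gt_near r_lt) => [[U V] [/= Uz Vw] UV].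
  exists (double_base @^-1` U, double_base @^-1` V).
    by split; apply: double_base_continuous.
  move=> [z' w'] [/= Uz' Vw']; apply: lt_le_trans (dist_le_double_dist z' w').
  exact: (UV (double_base z', double_base w')).
have sheet_zw : double_sheet z != double_sheet w.
  by apply: contraTneq u_lt => e; rewrite /double_dist e eqxx -leNgt.
move: u_lt; rewrite /double_dist (negbTE sheet_zw) => r_lt.
have nAz : ~ A (double_base z) by move=> Az; move: r_lt; rewrite dist_viaEl // ltNge r_ge.
have nAw : ~ A (double_base w) by move=> Aw; move: r_lt; rewrite dist_viaEr // ltNge r_ge.
case: (dist_via_gt_near cA r_lt) => [[U V] [/= Uz Vw] UV].
exists (double_base @^-1` U `&` sheet_off_A (double_sheet z),
        double_base @^-1` V `&` sheet_off_A (double_sheet w)).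
  split; apply: filterI; try exact: double_base_continuous; apply: open_nbhs_nbhs;
    (split; [exact: open_sheet_off_A | by []]).
move=> [z' w'] [/= [Uz' [-> _]] [Vw' [-> _]]].
by rewrite (negbTE sheet_zw); exact: (UV (double_base z', double_base w')).
Qed.

Definition double_MetCH : MetCH R :=
  @Build_MetCH R double double_dist double_dist_ge0 double_dist_refl
    double_dist_triangle double_dist_separated double_compact double_hausdorff
    double_dist_upper_cont.

Lemma double_in_nonexp b y y' :
  double_dist (double_in b y) (double_in b y') <= d y y'.
Proof.
rewrite /double_dist !double_sheet_in !double_base_in.
case: b; case: (asboolP (A y)) => Ay; case: (asboolP (A y')) => Ay' //=.
- by rewrite dist_viaEl.
- by rewrite dist_viaEr.
Qed.

Definition double_hom (b : bool) : MetCHHom Y double_MetCH :=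
  @Build_MetCHHom R Y double_MetCH (double_in b) (@double_in_continuous b)
    (@double_in_nonexp b).

End double.

Lemma embedding_lift (R : realType) (W X Y : MetCH R) (f : MetCHHom X Y)
    (k : MetCHHom W Y) :
  embedding f -> (forall w, range f (k w)) -> exists u : MetCHHom W X, (f \o u = k)%FUN.
Proof.
case=> finj fdist k_in.
have {}k_in w : exists x, f x = k w by have [x _ fx] := k_in w; exists x.
pose u w := projT1 (cid (k_in w)).
have fu w : f (u w) = k w := projT2 (cid (k_in w)).
have ucont : continuous u.
  apply: (compact_injective_factor_continuous (@carrier_compact _ X)
    (@carrier_hausdorff _ Y) (@hom_cont _ _ _ f) finj (@hom_cont _ _ _ k) fu).
have unonexp a b : dist X (u a) (u b) <= dist W a b by rewrite fdist !fu hom_nonexp.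
by exists (Build_MetCHHom ucont unonexp); apply: funext => w; exact: fu.
Qed.

Lemma embedding_regular_mono (R : realType) (X Y : MetCH R) (f : MetCHHom X Y) :
  embedding f -> regular_mono f.
Proof.
move=> femb; have finj := femb.1.
have cA : compact (range f).
  apply: continuous_compact; last exact: carrier_compact.
  by apply: continuous_subspaceT; exact: hom_cont.
exists (double_MetCH cA), (double_hom cA false), (double_hom cA true); split.
  by apply: funext => x /=; apply/double_in_eq; exists x.
move=> W k gk_hk.
have k_in w : range f (k w) by apply/double_in_eq; exact: (congr1 (fun F => F w) gk_hk).
have [u fu] := embedding_lift femb k_in.
exists u; split => // u' fu'; apply: funext => w; apply: finj.
by rewrite -[LHS]/((f \o u') w) fu' -fu.
Qed.

Theorem proposition4p5 (R : realType) (X Y : MetCH R) (f : MetCHHom X Y) :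
  regular_mono f <-> embedding f.
Proof. by split; [exact: regular_mono_embedding | exact: embedding_regular_mono]. Qed.
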